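(* Let $f(t)=\sum_{k=0}^n a_kt^k$ with $a_k\in\mathbb{H}$ be a left quaternion polynomial, and let $r,s\in\mathbb{R}$ with $s\ne0$. Then there exist real numbers $\alpha_1,\dots,\alpha_4,\beta_1,\dots,\beta_4$ such that $$J(f)(r+\mathbf{i}s)=\begin{bmatrix}\alpha_1&-\beta_1&-\alpha_2&\beta_2\\ \beta_1&\alpha_1&\beta_2&\alpha_2\\ \alpha_3&-\beta_3&\alpha_4&-\beta_4\\ -\beta_3&-\alpha_3&\beta_4&\alpha_4\end{bmatrix}.$$
   Context: $\mathbb{H}$ is the real quaternion algebra, identified with $\mathbb{R}^4$ via $x+\mathbf{i}y+\mathbf{j}z+\mathbf{k}w\mapsto(x,y,z,w)$. A left polynomial $f(t)=\sum a_kt^k$ is evaluated at $c\in\mathbb{H}$ as $\sum a_kc^k$ and is viewed as a map $\mathbb{R}^4\to\mathbb{R}^4$ via $f=f_1+\mathbf{i}f_2+\mathbf{j}f_3+\mathbf{k}f_4\mapsto(f_1,f_2,f_3,f_4)$; $J(f)(c)=[\partial f_i/\partial x_j](c)$ with $(x_1,\dots,x_4)=(x,y,z,w)$. *)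

From Stdlib Require Import Reals List.
Open Scope R_scope.

(* Quaternion x + i y + j z + k w, identified with (x,y,z,w) in R^4. *)
Record quat : Type := Quat { qx : R; qy : R; qz : R; qw : R }.

Definition qzero : quat := Quat 0 0 0 0.
Definition qone : quat := Quat 1 0 0 0.

Definition qadd (p q : quat) : quat :=
  Quat (qx p + qx q) (qy p + qy q) (qz p + qz q) (qw p + qw q).

(* Hamilton product, with i^2 = j^2 = k^2 = ijk = -1. *)
Definition qmul (p q : quat) : quat :=
  Quat (qx p * qx q - qy p * qy q - qz p * qz q - qw p * qw q)
       (qx p * qy q + qy p * qx q + qz p * qw q - qw p * qz q)
       (qx p * qz q - qy p * qw q + qz p * qx q + qw p * qy q)
       (qx p * qw q + qy p * qz q - qz p * qy q + qw p * qx q).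

Fixpoint qpow (c : quat) (n : nat) : quat :=
  match n with O => qone | S m => qmul c (qpow c m) end.

Definition qscale (t : R) (q : quat) : quat :=
  Quat (t * qx q) (t * qy q) (t * qz q) (t * qw q).

(* A left polynomial f(t) = sum_k a_k t^k is given by its coefficient list
   [a_0; a_1; ...; a_n]; it is evaluated at c as sum_k a_k c^k. *)
Definition lpoly := list quat.

Fixpoint qeval_from (f : lpoly) (k : nat) (c : quat) : quat :=
  match f with
  | nil => qzero
  | a :: f' => qadd (qmul a (qpow c k)) (qeval_from f' (S k) c)
  end.

Definition qeval (f : lpoly) (c : quat) : quat := qeval_from f O c.

(* Coordinates (1-indexed as in the paper): component i of q, i = 1..4. *)
Definition qcomp (i : nat) (q : quat) : R :=
  match i with
  | 1%nat => qx q | 2%nat => qy q | 3%nat => qz q | _ => qw q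
  end.

Definition qbasis (j : nat) : quat :=
  match j with
  | 1%nat => Quat 1 0 0 0 | 2%nat => Quat 0 1 0 0
  | 3%nat => Quat 0 0 1 0 | _ => Quat 0 0 0 1
  end.

Definition jacobian_entry_is (f : lpoly) (c : quat) (i j : nat) (l : R) : Prop :=
  derivable_pt_lim (fun t => qcomp i (qeval f (qadd c (qscale t (qbasis j))))) 0 l.

Definition pattern_matrix (a1 a2 a3 a4 b1 b2 b3 b4 : R) (i j : nat) : R :=
  match i, j with
  | 1%nat, 1%nat => a1 | 1%nat, 2%nat => - b1 | 1%nat, 3%nat => - a2 | 1%nat, 4%nat => b2
  | 2%nat, 1%nat => b1 | 2%nat, 2%nat => a1 | 2%nat, 3%nat => b2 | 2%nat, 4%nat => a2
  | 3%nat, 1%nat => a3 | 3%nat, 2%nat => - b3 | 3%nat, 3%nat => a4 | 3%nat, 4%nat => - b4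
  | 4%nat, 1%nat => - b3 | 4%nat, 2%nat => - a3 | 4%nat, 3%nat => b4 | 4%nat, 4%nat => a4
  | _, _ => 0
  end.

(* The directional derivative of c |-> c^k along e is the sum over m < k of
   c^m e c^(k-1-m).  At a point c of the complex slice R + iR, a direction e
   in R + iR commutes with every power of c, while a direction e in jR + kR
   satisfies e p = conj(p) e for complex p.  Hence the derivative of f along
   e is A e for e = 1, i and B e for e = j, k, with A, B quaternions
   depending only on f and c; the four columns A, A i, B j, B k of the
   Jacobian have exactly the displayed shape. *)
From Stdlib Require Import Reals List Lia.
Open Scope R_scope.

Ltac quat_ring :=
  repeat match goal with q : quat |- _ => destruct q end;
  unfold qadd, qmul, qscale, qzero in *; simpl in *; f_equal; ring.

Lemma qmul_assoc (p q r : quat) : qmul p (qmul q r) = qmul (qmul p q) r.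
Proof. quat_ring. Qed.

Lemma qmul_addl (p q r : quat) : qmul (qadd p q) r = qadd (qmul p r) (qmul q r).
Proof. quat_ring. Qed.

Lemma qmul_0l (p : quat) : qmul qzero p = qzero.
Proof. quat_ring. Qed.

Definition is_qderiv (g : R -> quat) (x : R) (D : quat) : Prop :=
  derivable_pt_lim (fun t => qx (g t)) x (qx D) /\
  derivable_pt_lim (fun t => qy (g t)) x (qy D) /\
  derivable_pt_lim (fun t => qz (g t)) x (qz D) /\
  derivable_pt_lim (fun t => qw (g t)) x (qw D).

Lemma derivable_pt_lim_eq (f : R -> R) (x l l' : R) :
  derivable_pt_lim f x l -> l = l' -> derivable_pt_lim f x l'.
Proof. intros H <-; exact H. Qed.

Lemma is_qderiv_eq (g : R -> quat) (x : R) (D D' : quat) :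
  is_qderiv g x D -> D = D' -> is_qderiv g x D'.
Proof. intros H <-; exact H. Qed.

Lemma is_qderiv_const (q : quat) (x : R) : is_qderiv (fun _ => q) x qzero.
Proof. repeat split; apply derivable_pt_lim_const. Qed.

Lemma is_qderiv_add (g h : R -> quat) (x : R) (Dg Dh : quat) :
  is_qderiv g x Dg -> is_qderiv h x Dh ->
  is_qderiv (fun t => qadd (g t) (h t)) x (qadd Dg Dh).
Proof.
  intros (?&?&?&?) (?&?&?&?); repeat split; apply derivable_pt_lim_plus; auto.
Qed.

Lemma is_qderiv_mul (g h : R -> quat) (x : R) (Dg Dh : quat) :
  is_qderiv g x Dg -> is_qderiv h x Dh ->
  is_qderiv (fun t => qmul (g t) (h t)) x (qadd (qmul Dg (h x)) (qmul (g x) Dh)).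
Proof.
  intros (?&?&?&?) (?&?&?&?); repeat split; simpl;
  (eapply derivable_pt_lim_eq;
   [ repeat first [ apply derivable_pt_lim_minus | apply derivable_pt_lim_plus
                  | apply derivable_pt_lim_mult ]; eassumption
   | cbv beta; ring ]).
Qed.

Definition qline (c e : quat) (t : R) : quat := qadd c (qscale t e).

Lemma qline_0 (c e : quat) : qline c e 0 = c.
Proof. unfold qline; quat_ring. Qed.

Lemma is_qderiv_line (c e : quat) (x : R) : is_qderiv (qline c e) x e.
Proof.
  assert (Hlin : forall a b, derivable_pt_lim (fun t => a + t * b) x b).
  { intros a b; eapply derivable_pt_lim_eq.
    - apply derivable_pt_lim_plus; [apply derivable_pt_lim_const |].
      apply derivable_pt_lim_mult; [apply derivable_pt_lim_id | apply derivable_pt_lim_const].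
    - cbv beta; ring. }
  repeat split; apply Hlin.
Qed.

(* [dpow c e k] is the sum over m < k of c^m e c^(k-1-m). *)
Fixpoint dpow (c e : quat) (k : nat) : quat :=
  match k with
  | O => qzero
  | S m => qadd (qmul e (qpow c m)) (qmul c (dpow c e m))
  end.

Fixpoint deval_from (c e : quat) (f : lpoly) (k : nat) : quat :=
  match f with
  | nil => qzero
  | a :: f' => qadd (qmul a (dpow c e k)) (deval_from c e f' (S k))
  end.

Lemma is_qderiv_qpow_line (c e : quat) (x : R) (k : nat) :
  is_qderiv (fun t => qpow (qline c e t) k) x (dpow (qline c e x) e k).
Proof.
  induction k as [|k IHk]; simpl.
  - apply is_qderiv_const.
  - exact (is_qderiv_mul _ _ x _ _ (is_qderiv_line c e x) IHk).
Qed.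

Lemma is_qderiv_qeval_from_line (c e : quat) (x : R) (f : lpoly) (k : nat) :
  is_qderiv (fun t => qeval_from f k (qline c e t)) x
            (deval_from (qline c e x) e f k).
Proof.
  revert k; induction f as [|a f IHf]; intros k; simpl.
  - apply is_qderiv_const.
  - eapply is_qderiv_eq.
    + apply is_qderiv_add; [| apply IHf].
      apply is_qderiv_mul; [apply is_qderiv_const | apply is_qderiv_qpow_line].
    + rewrite qmul_0l; quat_ring.
Qed.

Section TwistedFactorisation.

Variables (sigma : quat -> quat) (c e : quat).
Hypothesis e_twist_qpow : forall k, qmul e (qpow c k) = qmul (sigma (qpow c k)) e.

(* The sum over m < k of c^m sigma(c^(k-1-m)). *)
Fixpoint twisted_sum (k : nat) : quat :=
  match k with
  | O => qzero
  | S m => qadd (sigma (qpow c m)) (qmul c (twisted_sum m))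
  end.

Fixpoint coef_combination (f : lpoly) (k : nat) : quat :=
  match f with
  | nil => qzero
  | a :: f' => qadd (qmul a (twisted_sum k)) (coef_combination f' (S k))
  end.

Lemma dpow_twisted (k : nat) : dpow c e k = qmul (twisted_sum k) e.
Proof.
  induction k as [|k IHk]; simpl.
  - now rewrite qmul_0l.
  - now rewrite IHk, e_twist_qpow, qmul_assoc, qmul_addl.
Qed.

Lemma deval_from_twisted (f : lpoly) (k : nat) :
  deval_from c e f k = qmul (coef_combination f k) e.
Proof.
  revert k; induction f as [|a f IHf]; intros k; simpl.
  - now rewrite qmul_0l.
  - now rewrite IHf, dpow_twisted, qmul_assoc, qmul_addl.
Qed.

End TwistedFactorisation.

Definition is_complex (q : quat) : Prop := qz q = 0 /\ qw q = 0.

Definition qconjC (q : quat) : quat := Quat (qx q) (- qy q) (qz q) (qw q).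

Lemma is_complex_qpow (c : quat) (k : nat) : is_complex c -> is_complex (qpow c k).
Proof.
  intros [Hz Hw]; induction k as [|k [IHz IHw]]; simpl.
  - split; reflexivity.
  - unfold is_complex, qmul; simpl; rewrite Hz, Hw, IHz, IHw; split; ring.
Qed.

Lemma qmul_complex_comm (p q : quat) :
  is_complex p -> is_complex q -> qmul p q = qmul q p.
Proof. destruct p, q; intros [Hpz Hpw] [Hqz Hqw]; simpl in *; subst; quat_ring. Qed.

Lemma qmul_jk_complex (e p : quat) :
  qx e = 0 -> qy e = 0 -> is_complex p -> qmul e p = qmul (qconjC p) e.
Proof. destruct e, p; intros Hx Hy [Hz Hw]; unfold qconjC; simpl in *; subst; quat_ring. Qed.

Lemma jacobian_column (f : lpoly) (c : quat) (j : nat) (D : quat) :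
  is_qderiv (fun t => qeval f (qline c (qbasis j) t)) 0 D ->
  forall i, jacobian_entry_is f c i j (qcomp i D).
Proof.
  intros (Hx&Hy&Hz&Hw) i.
  destruct i as [|[|[|[|]]]]; assumption.
Qed.

Lemma jacobian_column_twisted (sigma : quat -> quat) (f : lpoly) (c : quat) (j : nat) :
  (forall k, qmul (qbasis j) (qpow c k) = qmul (sigma (qpow c k)) (qbasis j)) ->
  forall i, jacobian_entry_is f c i j
              (qcomp i (qmul (coef_combination sigma c f 0) (qbasis j))).
Proof.
  intros Htwist; apply jacobian_column.
  rewrite <- deval_from_twisted by exact Htwist.
  pose proof (is_qderiv_qeval_from_line c (qbasis j) 0 f 0) as Hderiv.
  now rewrite qline_0 in Hderiv.
Qed.

Theorem proposition4p1 (f : lpoly) (r s : R) (hs : s <> 0) :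
  exists a1 a2 a3 a4 b1 b2 b3 b4 : R,
    forall i j : nat, (1 <= i <= 4)%nat -> (1 <= j <= 4)%nat ->
      jacobian_entry_is f (Quat r s 0 0) i j (pattern_matrix a1 a2 a3 a4 b1 b2 b3 b4 i j).
Proof.
  set (c := Quat r s 0 0).
  assert (Hc : forall k, is_complex (qpow c k)) by (intros; apply is_complex_qpow; split; reflexivity).
  set (A := coef_combination (fun p => p) c f 0).
  set (B := coef_combination qconjC c f 0).
  assert (HA : forall j, (j = 1 \/ j = 2)%nat ->
            forall i, jacobian_entry_is f c i j (qcomp i (qmul A (qbasis j)))).
  { intros j Hj; apply jacobian_column_twisted; intros k.
    apply qmul_complex_comm; [destruct Hj as [-> | ->]; split; reflexivity | apply Hc]. }
  assert (HB : forall j, (j = 3 \/ j = 4)%nat ->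
            forall i, jacobian_entry_is f c i j (qcomp i (qmul B (qbasis j)))).
  { intros j Hj; apply jacobian_column_twisted; intros k.
    apply qmul_jk_complex; [destruct Hj as [-> | ->]; reflexivity .. | apply Hc]. }
  exists (qx A), (qz B), (qz A), (qx B), (qy A), (- qw B), (- qw A), (qy B).
  intros i j Hi Hj.
  assert (Hi' : i = 1%nat \/ i = 2%nat \/ i = 3%nat \/ i = 4%nat) by lia.
  assert (Hj' : j = 1%nat \/ j = 2%nat \/ j = 3%nat \/ j = 4%nat) by lia.
  destruct Hj' as [-> | [-> | [-> | ->]]];
    [ pose proof (HA 1%nat (or_introl eq_refl)) as Hcol
    | pose proof (HA 2%nat (or_intror eq_refl)) as Hcol
    | pose proof (HB 3%nat (or_introl eq_refl)) as Hcol
    | pose proof (HB 4%nat (or_intror eq_refl)) as Hcol ];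
    destruct Hi' as [-> | [-> | [-> | ->]]];
    (eapply derivable_pt_lim_eq; [apply Hcol | simpl; ring]).
Qed.
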